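(* Let $J=(a,b)\subseteq\mathbb R$ be an open interval (possibly unbounded) and let $A:J\to\mathbb R$ be differentiable with $|A'(x)-A'(y)|\le M|x-y|$ for all $x,y\in J$, for some constant $M>0$. Then $\bigl|\mathtt S[\mathrm{Im}K_\Gamma](\mathbf z)\bigr|\le\left(8+\frac32\right)M^2$ for every three-tuple $\mathbf z$ of distinct points on $\Gamma=\{x+iA(x):x\in J\}$.
   Context: $s(x)=\sqrt{1+(A'(x))^2}$. The kernel (normalizing factor $1/(2\pi)$ omitted) is $K_\Gamma(w,z)=\dfrac{A'(x)-i}{s(x)\,[\,x-y+i(A(x)-A(y))\,]}$ for $w=x+iA(x)$, $z=y+iA(y)$, $x\neq y$; $\mathrm{Im}K_\Gamma$ is its imaginary part. For a real-valued $K$ and distinct $z_1,z_2,z_3$, $\mathtt S[K](\mathbf z)=\sum_{\sigma\in S_3}K(z_{\sigma(1)},z_{\sigma(2)})K(z_{\sigma(1)},z_{\sigma(3)})$, $S_3$ the permutation group on three elements. *)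

From Stdlib Require Import Reals.
From Coquelicot Require Import Coquelicot.
Open Scope R_scope.

Definition in_interval (a b : Rbar) (x : R) : Prop := Rbar_lt a x /\ Rbar_lt x b.

Definition on_graph (a b : Rbar) (A : R -> R) (z : C) : Prop :=
  exists x : R, in_interval a b x /\ z = (x, A x).

Definition sfun (Ap : R -> R) (x : R) : R := sqrt (1 + (Ap x)^2).

(* K_Gamma(w,z) = (A'(x) - i) / ( s(x) [ x - y + i (A(x) - A(y)) ] ),
   w = x + iA(x), z = y + iA(y); note x - y + i(A(x)-A(y)) = w - z and x = Re w. *)
Definition KGamma (Ap : R -> R) (w z : C) : C :=
  Cdiv (Cminus (RtoC (Ap (Re w))) (0, 1)) (Cmult (RtoC (sfun Ap (Re w))) (Cminus w z)).

Definition ImK (Ap : R -> R) (w z : C) : R := Im (KGamma Ap w z).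

(* S[K](z1,z2,z3) = sum over sigma in S_3 of K(z_s1, z_s2) K(z_s1, z_s3) *)
Definition Ssym (K : C -> C -> R) (z1 z2 z3 : C) : R :=
    K z1 z2 * K z1 z3
  + K z1 z3 * K z1 z2
  + K z2 z1 * K z2 z3
  + K z2 z3 * K z2 z1
  + K z3 z1 * K z3 z2
  + K z3 z2 * K z3 z1.

From Stdlib Require Import Reals Lra.
From Coquelicot Require Import Coquelicot.
Open Scope R_scope.

(* Write the point pair as w - z = (x - y) (1 + i m), with m the slope of the chord.
   Then Im K(w, z) = - cos(atan A'(x) - atan m) cos(atan m) / (x - y), so for
   x1 < x2 < x3 the symmetrised sum is twice a three-term combination of such products
   over (x2-x1)(x3-x1), (x2-x1)(x3-x2) and (x3-x2)(x3-x1).  By the mean value theorem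
   every tangent lies within angle M h of the neighbouring chords, and cos is flat at 0,
   so replacing the first and last cosine products by the middle one costs 2 M^2 each.
   What remains is the middle cosine product times the same combination of the factors
   cos(atan m) = 1/sqrt(1+m^2); this is the triangle defect (a + c - b)/(abc) of the
   chord lengths, at most M^2/2.  Altogether |S| <= 2 (M^2/2 + 4 M^2) = 9 M^2. *)

Lemma Rabs_sin_le x : Rabs (sin x) <= Rabs x.
Proof.
  destruct (MVT_abs sin cos 0 x) as [c [Hc _]].
  { intros c _; apply derivable_pt_lim_sin. }
  rewrite sin_0, !Rminus_0_r in Hc; rewrite Hc.
  assert (Rabs (cos c) <= 1) by apply Rabs_le, COS_bound.
  pose proof (Rabs_pos x); nra.
Qed.

Lemma Rabs_atan_sub_le x y : Rabs (atan x - atan y) <= Rabs (x - y).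
Proof.
  destruct (MVT_abs atan (fun t => / (1 + t ^ 2)) y x) as [c [Hc _]].
  { intros c _; apply derivable_pt_lim_atan. }
  rewrite Hc.
  pose proof (pow2_ge_0 c).
  assert (Hinv : 0 < / (1 + c ^ 2) <= 1).
  { split; [apply Rinv_0_lt_compat; lra|].
    rewrite <- Rinv_1 at 2; apply Rinv_le_contravar; lra. }
  rewrite (Rabs_pos_eq (/ (1 + c ^ 2))) by lra.
  pose proof (Rabs_pos (x - y)); nra.
Qed.

Lemma Rabs_cos_sub_le x y : Rabs (cos x - cos y) <= Rabs (x - y) * Rabs (x + y) / 2.
Proof.
  pose proof (Rabs_sin_le ((x - y) / 2)) as Hd.
  pose proof (Rabs_sin_le ((x + y) / 2)) as Hs.
  rewrite Rabs_div, (Rabs_pos_eq 2) in Hd, Hs by lra.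
  rewrite form2, !Rabs_mult, (Rabs_left (-2)) by lra.
  pose proof (Rabs_pos (sin ((x - y) / 2))); pose proof (Rabs_pos (sin ((x + y) / 2))).
  nra.
Qed.

Lemma Rabs_cos_mul_sub_le a b a' b' :
  Rabs (cos a * cos b - cos a' * cos b') <=
  Rabs (a - a') * Rabs (a + a') / 2 + Rabs (b - b') * Rabs (b + b') / 2.
Proof.
  replace (cos a * cos b - cos a' * cos b')
    with (cos b * (cos a - cos a') + cos a' * (cos b - cos b')) by ring.
  eapply Rle_trans; [apply Rabs_triang|]; rewrite !Rabs_mult.
  pose proof (Rabs_cos_sub_le a a'); pose proof (Rabs_cos_sub_le b b').
  assert (Rabs (cos b) <= 1) by apply Rabs_le, COS_bound.
  assert (Rabs (cos a') <= 1) by apply Rabs_le, COS_bound.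
  pose proof (Rabs_pos (cos a - cos a')); pose proof (Rabs_pos (cos b - cos b')).
  nra.
Qed.

Lemma one_le_sqrt_1_plus_sqr m : 1 <= sqrt (1 + m ^ 2).
Proof.
  rewrite <- sqrt_1 at 1; apply sqrt_le_1_alt.
  pose proof (pow2_ge_0 m); lra.
Qed.

Lemma sqrt_1_plus_sqr_sqr m : sqrt (1 + m ^ 2) * sqrt (1 + m ^ 2) = 1 + m ^ 2.
Proof. apply sqrt_sqrt; pose proof (pow2_ge_0 m); lra. Qed.

Definition cos_angle (p m : R) : R := cos (atan p - atan m).

Definition inv_norm (m : R) : R := / sqrt (1 + m ^ 2).

Lemma inv_norm_bounds m : 0 < inv_norm m <= 1.
Proof.
  pose proof (one_le_sqrt_1_plus_sqr m).
  unfold inv_norm; split; [apply Rinv_0_lt_compat; lra|].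
  rewrite <- Rinv_1 at 2; apply Rinv_le_contravar; lra.
Qed.

Lemma cos_angle_eq p m : cos_angle p m = (1 + p * m) * inv_norm p * inv_norm m.
Proof.
  pose proof (one_le_sqrt_1_plus_sqr p); pose proof (one_le_sqrt_1_plus_sqr m).
  unfold cos_angle, inv_norm.
  rewrite cos_minus, !cos_atan, !sin_atan; unfold Rsqr.
  replace (1 + p * p) with (1 + p ^ 2) by ring.
  replace (1 + m * m) with (1 + m ^ 2) by ring.
  field; lra.
Qed.

Lemma Rabs_cos_angle_le p m : Rabs (cos_angle p m) <= 1.
Proof. apply Rabs_le, COS_bound. Qed.

Lemma sqrt_prod_defect_bounds u v :
  0 <= sqrt (1 + u ^ 2) * sqrt (1 + v ^ 2) - 1 - u * v <= (u - v) ^ 2 / 2.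
Proof.
  set (P := sqrt (1 + u ^ 2) * sqrt (1 + v ^ 2)).
  assert (HP0 : 0 <= P) by (apply Rmult_le_pos; apply sqrt_pos).
  assert (HP2 : P * P = (1 + u * v) ^ 2 + (u - v) ^ 2).
  { unfold P.
    replace (sqrt (1 + u ^ 2) * sqrt (1 + v ^ 2) * (sqrt (1 + u ^ 2) * sqrt (1 + v ^ 2)))
      with (sqrt (1 + u ^ 2) * sqrt (1 + u ^ 2) * (sqrt (1 + v ^ 2) * sqrt (1 + v ^ 2)))
      by ring.
    rewrite !sqrt_1_plus_sqr_sqr; ring. }
  pose proof (pow2_ge_0 (u - v)); pose proof (pow2_ge_0 u); pose proof (pow2_ge_0 v).
  pose proof (pow2_ge_0 (u ^ 2 - v ^ 2)).
  split; nra.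
Qed.

Lemma Rabs_sub_triang x y z : Rabs (x - z) <= Rabs (x - y) + Rabs (y - z).
Proof. replace (x - z) with ((x - y) + (y - z)) by ring; apply Rabs_triang. Qed.

Lemma Rabs_wavg_sub_le M h1 h2 u v : 0 < h1 -> 0 < h2 ->
  Rabs (u - v) <= M * (h1 + h2) -> Rabs ((h1 * u + h2 * v) / (h1 + h2) - v) <= M * h1.
Proof.
  intros H1 H2 Huv.
  replace ((h1 * u + h2 * v) / (h1 + h2) - v) with (h1 * (u - v) / (h1 + h2)) by (field; lra).
  rewrite Rabs_div, Rabs_mult, (Rabs_pos_eq h1), (Rabs_pos_eq (h1 + h2)) by lra.
  apply Rle_div_l; [lra|].
  pose proof (Rabs_pos (u - v)); nra.
Qed.

Lemma cos_angle_products_sub_le M h1 h2 p1 p2 m12 m23 m13 : 0 < h1 -> 0 < h2 ->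
  Rabs (p1 - p2) <= M * h1 -> Rabs (p1 - m12) <= M * h1 -> Rabs (p2 - m12) <= M * h1 ->
  Rabs (p2 - m23) <= M * h2 -> m13 = (h1 * m12 + h2 * m23) / (h1 + h2) ->
  Rabs (cos_angle p1 m12 * cos_angle p1 m13 - cos_angle p2 m12 * cos_angle p2 m23)
    <= 2 * M ^ 2 * h1 * (h1 + h2).
Proof.
  intros H1 H2 Hp12 Hp1 Hp2 Hq2 Hm13.
  assert (Hm12_23 : Rabs (m12 - m23) <= M * (h1 + h2)).
  { pose proof (Rabs_sub_triang m12 p2 m23); rewrite Rabs_minus_sym in Hp2; lra. }
  assert (Hm13_23 : Rabs (m13 - m23) <= M * h1) by (subst m13; apply Rabs_wavg_sub_le; lra).
  assert (Hm12_13 : Rabs (m12 - m13) <= M * h2).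
  { rewrite Rabs_minus_sym, Hm13.
    replace ((h1 * m12 + h2 * m23) / (h1 + h2)) with ((h2 * m23 + h1 * m12) / (h2 + h1))
      by (field; lra).
    apply Rabs_wavg_sub_le; [lra | lra | rewrite Rabs_minus_sym; lra]. }
  pose proof (Rabs_atan_sub_le p1 p2); pose proof (Rabs_atan_sub_le m23 m13).
  pose proof (Rabs_atan_sub_le p1 m12); pose proof (Rabs_atan_sub_le p2 m12).
  pose proof (Rabs_atan_sub_le p1 m13); pose proof (Rabs_atan_sub_le p2 m23).
  pose proof (Rabs_sub_triang p1 m12 m13).
  unfold cos_angle.
  set (a := atan p1 - atan m12) in *; set (a' := atan p2 - atan m12) in *.
  set (b := atan p1 - atan m13) in *; set (b' := atan p2 - atan m23) in *.
  assert (Ha_sub : Rabs (a - a') <= M * h1).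
  { unfold a, a'; replace (atan p1 - atan m12 - (atan p2 - atan m12)) with (atan p1 - atan p2)
      by ring; lra. }
  assert (Ha_add : Rabs (a + a') <= 2 * M * h1).
  { pose proof (Rabs_triang a a'). lra. }
  assert (Hb_sub : Rabs (b - b') <= 2 * M * h1).
  { unfold b, b'; replace (atan p1 - atan m13 - (atan p2 - atan m23))
      with ((atan p1 - atan p2) + (atan m23 - atan m13)) by ring.
    pose proof (Rabs_triang (atan p1 - atan p2) (atan m23 - atan m13)).
    rewrite Rabs_minus_sym in Hm13_23; lra. }
  assert (Hb_add : Rabs (b + b') <= M * (h1 + 2 * h2)) by (pose proof (Rabs_triang b b'); lra).
  eapply Rle_trans; [apply Rabs_cos_mul_sub_le|].
  pose proof (Rmult_le_compat _ _ _ _ (Rabs_pos _) (Rabs_pos _) Ha_sub Ha_add).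
  pose proof (Rmult_le_compat _ _ _ _ (Rabs_pos _) (Rabs_pos _) Hb_sub Hb_add).
  nra.
Qed.

Lemma inv_norm_three_point_bound h1 h2 u v w : 0 < h1 -> 0 < h2 ->
  w = (h1 * u + h2 * v) / (h1 + h2) ->
  Rabs (inv_norm u * inv_norm w / (h1 * (h1 + h2)) - inv_norm u * inv_norm v / (h1 * h2)
        + inv_norm w * inv_norm v / (h2 * (h1 + h2))) <= (u - v) ^ 2 / (2 * (h1 + h2) ^ 2).
Proof.
  intros H1 H2 Hw.
  pose proof (one_le_sqrt_1_plus_sqr u); pose proof (one_le_sqrt_1_plus_sqr v).
  pose proof (one_le_sqrt_1_plus_sqr w).
  pose proof (sqrt_1_plus_sqr_sqr u) as Eu; pose proof (sqrt_1_plus_sqr_sqr v) as Ev.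
  pose proof (sqrt_1_plus_sqr_sqr w) as Ew.
  pose proof (sqrt_prod_defect_bounds u v) as Hdefect.
  unfold inv_norm.
  set (Su := sqrt (1 + u ^ 2)) in *; set (Sv := sqrt (1 + v ^ 2)) in *;
    set (Sw := sqrt (1 + w ^ 2)) in *.
  (* The chord lengths |z1 z2|, |z1 z3|, |z2 z3|; the expression is (a + c - b) / (a b c). *)
  set (a := h1 * Su); set (b := (h1 + h2) * Sw); set (c := h2 * Sv).
  assert (Ha : h1 <= a) by (unfold a; nra).
  assert (Hb : h1 + h2 <= b) by (unfold b; nra).
  assert (Hc : h2 <= c) by (unfold c; nra).
  assert (Hchord : (a + c - b) * (a + c + b) = 2 * h1 * h2 * (Su * Sv - 1 - u * v)).
  { replace ((a + c - b) * (a + c + b))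
      with (h1 * h1 * (Su * Su) + h2 * h2 * (Sv * Sv) + 2 * h1 * h2 * (Su * Sv)
            - (h1 + h2) * (h1 + h2) * (Sw * Sw))
      by (unfold a, b, c; ring).
    rewrite Eu, Ev, Ew, Hw; field; lra. }
  assert (Hexpr : / Su * / Sw / (h1 * (h1 + h2)) - / Su * / Sv / (h1 * h2)
                  + / Sw * / Sv / (h2 * (h1 + h2))
                  = 2 * h1 * h2 * (Su * Sv - 1 - u * v) / (a * b * c * (a + b + c))).
  { rewrite <- Hchord; unfold a, b, c; field; repeat split; nra. }
  assert (HD : h1 * (h1 + h2) * h2 * (2 * (h1 + h2)) <= a * b * c * (a + b + c)).
  { repeat (apply Rmult_le_compat || apply Rmult_le_pos); lra. }
  assert (HD0 : 0 < h1 * (h1 + h2) * h2 * (2 * (h1 + h2)))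
    by (repeat apply Rmult_lt_0_compat; lra).
  destruct Hdefect as [Hdefect0 Hdefect1].
  rewrite Hexpr, Rabs_pos_eq.
  - apply Rle_div_l; [lra|].
    apply Rle_trans
      with ((u - v) ^ 2 / (2 * (h1 + h2) ^ 2) * (h1 * (h1 + h2) * h2 * (2 * (h1 + h2)))).
    + replace ((u - v) ^ 2 / (2 * (h1 + h2) ^ 2) * (h1 * (h1 + h2) * h2 * (2 * (h1 + h2))))
        with (h1 * h2 * (u - v) ^ 2) by (field; lra).
      assert (0 < h1 * h2) by nra; nra.
    + apply Rmult_le_compat_l; [|exact HD].
      apply Rmult_le_pos; [apply pow2_ge_0|]; apply Rlt_le, Rinv_0_lt_compat; nra.
  - apply Rmult_le_pos; [|apply Rlt_le, Rinv_0_lt_compat; lra].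
    repeat apply Rmult_le_pos; lra.
Qed.

Lemma inv_norm_three_point_le M h1 h2 u v w : 0 < h1 -> 0 < h2 ->
  Rabs (u - v) <= M * (h1 + h2) -> w = (h1 * u + h2 * v) / (h1 + h2) ->
  Rabs (inv_norm u * inv_norm w / (h1 * (h1 + h2)) - inv_norm u * inv_norm v / (h1 * h2)
        + inv_norm w * inv_norm v / (h2 * (h1 + h2))) <= M ^ 2 / 2.
Proof.
  intros H1 H2 Huv Hw.
  eapply Rle_trans; [apply inv_norm_three_point_bound; assumption|].
  apply Rle_div_l; [nra|].
  replace (M ^ 2 / 2 * (2 * (h1 + h2) ^ 2)) with ((M * (h1 + h2)) ^ 2) by field.
  rewrite <- pow2_abs; apply pow_incr; split; [apply Rabs_pos | exact Huv].
Qed.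

Definition kernel_factor (p m : R) : R := cos_angle p m * inv_norm m.

Lemma Rabs_mul_ratio_le K k1 k2 h1 h2 B : 0 < h1 -> 0 < h2 ->
  0 < k1 <= 1 -> 0 < k2 <= 1 -> Rabs K <= B * h1 * h2 ->
  Rabs (K * (k1 * k2 / (h1 * h2))) <= B.
Proof.
  intros H1 H2 Hk1 Hk2 HK.
  assert (Hh : 0 < h1 * h2) by nra.
  assert (Hk : 0 < k1 * k2 <= 1) by (split; nra).
  rewrite Rabs_mult, (Rabs_pos_eq (k1 * k2 / (h1 * h2))).
  2: { apply Rlt_le, Rdiv_lt_0_compat; lra. }
  unfold Rdiv; rewrite <- Rmult_assoc; apply Rle_div_l; [exact Hh|].
  pose proof (Rabs_pos K); nra.
Qed.

Lemma kernel_factor_three_point_bound M h1 h2 p1 p2 p3 m12 m23 m13 : 0 < h1 -> 0 < h2 ->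
  Rabs (p1 - p2) <= M * h1 -> Rabs (p3 - p2) <= M * h2 ->
  Rabs (p1 - m12) <= M * h1 -> Rabs (p2 - m12) <= M * h1 ->
  Rabs (p2 - m23) <= M * h2 -> Rabs (p3 - m23) <= M * h2 ->
  m13 = (h1 * m12 + h2 * m23) / (h1 + h2) ->
  Rabs (kernel_factor p1 m12 * kernel_factor p1 m13 / (h1 * (h1 + h2))
        - kernel_factor p2 m12 * kernel_factor p2 m23 / (h1 * h2)
        + kernel_factor p3 m13 * kernel_factor p3 m23 / (h2 * (h1 + h2))) <= 9 / 2 * M ^ 2.
Proof.
  intros H1 H2 Hp12 Hp32 Hp1 Hp2 Hq2 Hq3 Hm13.
  assert (Hm13' : m13 = (h2 * m23 + h1 * m12) / (h2 + h1)) by (rewrite Hm13; field; lra).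
  pose proof (cos_angle_products_sub_le M h1 h2 p1 p2 m12 m23 m13 H1 H2 Hp12 Hp1 Hp2 Hq2 Hm13)
    as Hleft.
  pose proof (cos_angle_products_sub_le M h2 h1 p3 p2 m23 m12 m13 H2 H1 Hp32 Hq3 Hq2 Hp2 Hm13')
    as Hright.
  rewrite (Rmult_comm (cos_angle p2 m23)), (Rplus_comm h2 h1) in Hright.
  set (D := inv_norm m12 * inv_norm m13 / (h1 * (h1 + h2))
            - inv_norm m12 * inv_norm m23 / (h1 * h2)
            + inv_norm m13 * inv_norm m23 / (h2 * (h1 + h2))).
  assert (Hnorms : Rabs D <= M ^ 2 / 2).
  { apply inv_norm_three_point_le; try assumption.
    pose proof (Rabs_sub_triang m12 p2 m23); rewrite Rabs_minus_sym in Hp2; lra. }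
  set (K1 := cos_angle p1 m12 * cos_angle p1 m13) in *.
  set (K2 := cos_angle p2 m12 * cos_angle p2 m23) in *.
  set (K3 := cos_angle p3 m23 * cos_angle p3 m13) in *.
  replace (kernel_factor p1 m12 * kernel_factor p1 m13 / (h1 * (h1 + h2))
           - kernel_factor p2 m12 * kernel_factor p2 m23 / (h1 * h2)
           + kernel_factor p3 m13 * kernel_factor p3 m23 / (h2 * (h1 + h2)))
    with (K2 * D + (K1 - K2) * (inv_norm m12 * inv_norm m13 / (h1 * (h1 + h2)))
          + (K3 - K2) * (inv_norm m23 * inv_norm m13 / (h2 * (h1 + h2))))
    by (unfold kernel_factor, K1, K2, K3, D; field; lra).
  assert (HK2 : Rabs K2 <= 1).
  { unfold K2; rewrite Rabs_mult.
    pose proof (Rabs_cos_angle_le p2 m12); pose proof (Rabs_cos_angle_le p2 m23).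
    pose proof (Rabs_pos (cos_angle p2 m12)); nra. }
  assert (Hmid : Rabs (K2 * D) <= M ^ 2 / 2).
  { rewrite Rabs_mult; pose proof (Rabs_pos K2); pose proof (Rabs_pos D); nra. }
  assert (Hfirst : Rabs ((K1 - K2) * (inv_norm m12 * inv_norm m13 / (h1 * (h1 + h2))))
                   <= 2 * M ^ 2).
  { apply Rabs_mul_ratio_le; try apply inv_norm_bounds; lra. }
  assert (Hlast : Rabs ((K3 - K2) * (inv_norm m23 * inv_norm m13 / (h2 * (h1 + h2))))
                  <= 2 * M ^ 2).
  { apply Rabs_mul_ratio_le; try apply inv_norm_bounds; lra. }
  eapply Rle_trans; [apply Rabs_triang|].
  eapply Rle_trans; [apply Rplus_le_compat_r, Rabs_triang|].
  lra.
Qed.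

Definition slope (A : R -> R) (x y : R) : R := (A x - A y) / (x - y).

Lemma slope_sym A x y : x <> y -> slope A x y = slope A y x.
Proof. intros Hxy; unfold slope; field; lra. Qed.

Lemma slope_wavg A x1 x2 x3 : x1 < x2 < x3 ->
  slope A x1 x3 = ((x2 - x1) * slope A x1 x2 + (x3 - x2) * slope A x2 x3) / (x3 - x1).
Proof. intros H; unfold slope; field; lra. Qed.

Lemma ImK_graph (A Ap : R -> R) x y : x <> y ->
  ImK Ap (x, A x) (y, A y) = - kernel_factor (Ap x) (slope A x y) / (x - y).
Proof.
  intros Hxy.
  assert (Hy : A y = A x - slope A x y * (x - y)) by (unfold slope; field; lra).
  pose proof (one_le_sqrt_1_plus_sqr (Ap x)); pose proof (one_le_sqrt_1_plus_sqr (slope A x y)).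
  pose proof (sqrt_1_plus_sqr_sqr (slope A x y)) as Hm.
  unfold ImK, KGamma, sfun, kernel_factor; rewrite cos_angle_eq, Hy; unfold inv_norm.
  unfold Cdiv, Cminus, Cmult, Cinv, Copp, Cplus, RtoC, Im, Re; cbn [fst snd].
  set (Sp := sqrt (1 + Ap x ^ 2)) in *; set (Sm := sqrt (1 + slope A x y ^ 2)) in *.
  set (m := slope A x y) in *; clearbody Sp Sm m.
  replace ((1 + Ap x * m) * / Sp * / Sm * / Sm) with ((1 + Ap x * m) / (Sp * (Sm * Sm)))
    by (field; lra).
  rewrite Hm.
  assert (Hxy' : x - y <> 0) by (apply Rminus_eq_contra; exact Hxy).
  pose proof (pow2_ge_0 m).
  assert (Hden : 0 < (Sp * (x - y)) ^ 2 + (Sp * (A x - (A x - m * (x - y)))) ^ 2).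
  { replace ((Sp * (x - y)) ^ 2 + (Sp * (A x - (A x - m * (x - y)))) ^ 2)
      with (Sp ^ 2 * (x - y) ^ 2 * (1 + m ^ 2)) by ring.
    apply Rmult_lt_0_compat; [apply Rmult_lt_0_compat; apply pow2_gt_0|]; lra. }
  field; repeat split; try assumption; lra.
Qed.

Lemma Ssym_ImK_graph (A Ap : R -> R) x1 x2 x3 : x1 <> x2 -> x1 <> x3 -> x2 <> x3 ->
  Ssym (ImK Ap) (x1, A x1) (x2, A x2) (x3, A x3) =
  2 * (kernel_factor (Ap x1) (slope A x1 x2) * kernel_factor (Ap x1) (slope A x1 x3)
         / ((x2 - x1) * (x3 - x1))
       - kernel_factor (Ap x2) (slope A x1 x2) * kernel_factor (Ap x2) (slope A x2 x3)
         / ((x2 - x1) * (x3 - x2))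
       + kernel_factor (Ap x3) (slope A x1 x3) * kernel_factor (Ap x3) (slope A x2 x3)
         / ((x3 - x2) * (x3 - x1))).
Proof.
  intros H12 H13 H23.
  unfold Ssym; rewrite !ImK_graph by congruence.
  rewrite (slope_sym A x2 x1), (slope_sym A x3 x1), (slope_sym A x3 x2) by congruence.
  field; repeat split; apply Rminus_eq_contra; congruence.
Qed.

Lemma in_interval_between a b x y t :
  in_interval a b x -> in_interval a b y -> x <= t <= y -> in_interval a b t.
Proof.
  intros [Hax _] [_ Hyb] [Hxt Hty]; split.
  - apply Rbar_lt_le_trans with x; [exact Hax | exact Hxt].
  - apply Rbar_le_lt_trans with y; [exact Hty | exact Hyb].
Qed.

Section LipschitzGraph.

Variables (a b : Rbar) (A Ap : R -> R) (M : R).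
Hypothesis M_nonneg : 0 <= M.
Hypothesis A_derive : forall x, in_interval a b x -> is_derive A x (Ap x).
Hypothesis Ap_lipschitz : forall x y, in_interval a b x -> in_interval a b y ->
  Rabs (Ap x - Ap y) <= M * Rabs (x - y).

Lemma slope_sub_derive_le x y t : x < y -> in_interval a b x -> in_interval a b y ->
  x <= t <= y -> Rabs (Ap t - slope A x y) <= M * (y - x).
Proof.
  intros Hxy Hx Hy Ht.
  destruct (MVT_cor2 A Ap x y Hxy) as [c [Hc Hcxy]].
  { intros c Hc; apply is_derive_Reals, A_derive, (in_interval_between a b x y); auto. }
  replace (slope A x y) with (Ap c)
    by (unfold slope; replace (A x - A y) with (Ap c * (x - y)) by lra; field; lra).
  eapply Rle_trans; [apply Ap_lipschitz; apply (in_interval_between a b x y); auto; lra|].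
  apply Rmult_le_compat_l; [exact M_nonneg|]; apply Rabs_le; lra.
Qed.

Lemma Ap_sub_le x y : x < y -> in_interval a b x -> in_interval a b y ->
  Rabs (Ap x - Ap y) <= M * (y - x).
Proof.
  intros Hxy Hx Hy.
  replace (y - x) with (Rabs (x - y)) by (rewrite Rabs_minus_sym; apply Rabs_pos_eq; lra).
  apply Ap_lipschitz; assumption.
Qed.

Lemma Ssym_ImK_graph_sorted_le x1 x2 x3 : x1 < x2 -> x2 < x3 ->
  in_interval a b x1 -> in_interval a b x2 -> in_interval a b x3 ->
  Rabs (Ssym (ImK Ap) (x1, A x1) (x2, A x2) (x3, A x3)) <= 9 * M ^ 2.
Proof.
  intros H12 H23 I1 I2 I3.
  rewrite Ssym_ImK_graph by lra.
  replace (x3 - x1) with ((x2 - x1) + (x3 - x2)) by ring.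
  rewrite Rabs_mult, (Rabs_pos_eq 2) by lra.
  replace (9 * M ^ 2) with (2 * (9 / 2 * M ^ 2)) by field.
  apply Rmult_le_compat_l; [lra|].
  apply kernel_factor_three_point_bound; try lra.
  - apply Ap_sub_le; assumption.
  - rewrite Rabs_minus_sym; apply Ap_sub_le; assumption.
  - apply slope_sub_derive_le; auto; lra.
  - apply slope_sub_derive_le; auto; lra.
  - apply slope_sub_derive_le; auto; lra.
  - apply slope_sub_derive_le; auto; lra.
  - rewrite (slope_wavg A x1 x2 x3) by lra; f_equal; ring.
Qed.

End LipschitzGraph.

Lemma Ssym_swap12 K z1 z2 z3 : Ssym K z1 z2 z3 = Ssym K z2 z1 z3.
Proof. unfold Ssym; ring. Qed.

Lemma Ssym_swap23 K z1 z2 z3 : Ssym K z1 z2 z3 = Ssym K z1 z3 z2.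
Proof. unfold Ssym; ring. Qed.

Lemma distinct_triple_sort (P : R -> R -> R -> Prop) :
  (forall x y z, P x y z -> P y x z) -> (forall x y z, P x y z -> P x z y) ->
  (forall x y z, x < y -> y < z -> P x y z) ->
  forall x y z, x <> y -> x <> z -> y <> z -> P x y z.
Proof.
  intros S12 S23 Hsorted x y z Hxy Hxz Hyz.
  destruct (Rdichotomy _ _ Hxy), (Rdichotomy _ _ Hxz), (Rdichotomy _ _ Hyz);
    first [ apply Hsorted; lra
          | apply S23, Hsorted; lra
          | apply S12, Hsorted; lra
          | apply S23, S12, Hsorted; lra
          | apply S12, S23, Hsorted; lra
          | apply S12, S23, S12, Hsorted; lra
          | lra ].
Qed.

Theorem corollary1p6 (a b : Rbar) (A Ap : R -> R) (M : R) :
  Rbar_lt a b ->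
  0 < M ->
  (forall x : R, in_interval a b x -> is_derive A x (Ap x)) ->
  (forall x y : R, in_interval a b x -> in_interval a b y ->
     Rabs (Ap x - Ap y) <= M * Rabs (x - y)) ->
  forall z1 z2 z3 : C,
    on_graph a b A z1 -> on_graph a b A z2 -> on_graph a b A z3 ->
    z1 <> z2 -> z1 <> z3 -> z2 <> z3 ->
    Rabs (Ssym (ImK Ap) z1 z2 z3) <= (8 + 3 / 2) * M ^ 2.
Proof.
  intros _ HM Hder Hlip z1 z2 z3 [x1 [I1 ->]] [x2 [I2 ->]] [x3 [I3 ->]] N12 N13 N23.
  revert I1 I2 I3.
  apply (distinct_triple_sort (fun x1 x2 x3 =>
    in_interval a b x1 -> in_interval a b x2 -> in_interval a b x3 ->
    Rabs (Ssym (ImK Ap) (x1, A x1) (x2, A x2) (x3, A x3)) <= (8 + 3 / 2) * M ^ 2)).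
  - intros x y z H Iy Ix Iz; rewrite Ssym_swap12; auto.
  - intros x y z H Ix Iz Iy; rewrite Ssym_swap23; auto.
  - intros x y z Hxy Hyz Ix Iy Iz.
    eapply Rle_trans; [apply (Ssym_ImK_graph_sorted_le a b A Ap M); auto; lra|].
    pose proof (pow2_ge_0 M); lra.
  - congruence.
  - congruence.
  - congruence.
Qed.
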